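(* A sequent $\Gamma\Rightarrow\Delta$ is derivable in $\mathsf{S.ConstCK}$ if and only if $\iota(\Gamma\Rightarrow\Delta)$ is derivable in $\mathsf{ConstCK}$.
   Context: Language $\mathcal{L}$: formulas $\varphi ::= p \mid \bot \mid \varphi\wedge\varphi \mid \varphi\vee\varphi \mid \varphi\to\varphi \mid \varphi \mathrel{\Box\!\!\to} \varphi \mid \varphi \mathrel{\Diamond\!\!\to}\varphi$; $\neg\varphi:=\varphi\to\bot$, $\top:=\neg\bot$, $\varphi\leftrightarrow\psi:=(\varphi\to\psi)\wedge(\psi\to\varphi)$. Hilbert system $\mathsf{ConstCK}$: any axiomatisation of intuitionistic propositional logic in $\mathcal{L}$ with modus ponens, plus axioms CM$_\Box$: $(\varphi\mathrel{\Box\!\!\to}\psi\wedge\chi)\to(\varphi\mathrel{\Box\!\!\to}\psi)\wedge(\varphi\mathrel{\Box\!\!\to}\chi)$; CC$_\Box$: $(\varphi\mathrel{\Box\!\!\to}\psi)\wedge(\varphi\mathrel{\Box\!\!\to}\chi)\to(\varphi\mathrel{\Box\!\!\to}\psi\wedge\chi)$; CN$_\Box$: $\varphi\mathrel{\Box\!\!\to}\top$; CN$_\Diamond$: $\neg(\varphi\mathrel{\Diamond\!\!\to}\bot)$; CK$_\Diamond$: $(\varphi\mathrel{\Box\!\!\to}(\psi\to\chi))\to((\varphi\mathrel{\Diamond\!\!\to}\psi)\to(\varphi\mathrel{\Diamond\!\!\to}\chi))$; and rules RA$_\Box$: from $\varphi\leftrightarrow\rho$ infer $(\varphi\mathrel{\Box\!\!\to}\psi)\leftrightarrow(\rho\mathrel{\Box\!\!\to}\psi)$;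 RC$_\Box$: from $\psi\leftrightarrow\chi$ infer $(\varphi\mathrel{\Box\!\!\to}\psi)\leftrightarrow(\varphi\mathrel{\Box\!\!\to}\chi)$; RA$_\Diamond$, RC$_\Diamond$: the same with $\mathrel{\Diamond\!\!\to}$. A sequent $\Gamma\Rightarrow\Delta$ is a pair of finite multisets of formulas with $|\Delta|\le1$; $\varphi\Leftrightarrow\rho$ abbreviates the two sequents $\varphi\Rightarrow\rho$, $\rho\Rightarrow\varphi$. Formula interpretation: $\iota(\Gamma\Rightarrow\Delta)=\bigwedge\Gamma\to\bigvee\Delta$ if $\Gamma\neq\emptyset$ and $\bigvee\Delta$ if $\Gamma=\emptyset$, with $\bigvee\emptyset=\bot$. Rules of $\mathsf{S.ConstCK}$ (premisses / conclusion, $0\le|\Delta|\le1$, $n\ge0$): init: $\Gamma,p\Rightarrow p$; $\bot_L$: $\Gamma,\bot\Rightarrow\Delta$; $\wedge_L$: $\Gamma,\varphi,\psi\Rightarrow\Delta$ / $\Gamma,\varphi\wedge\psi\Rightarrow\Delta$; $\wedge_R$: $\Gamma\Rightarrow\varphi$, $\Gamma\Rightarrow\psi$ / $\Gamma\Rightarrow\varphi\wedge\psi$; $\vee_L$: $\Gamma,\varphi\Rightarrow\Delta$, $\Gamma,\psi\Rightarrow\Delta$ / $\Gamma,\varphi\vee\psi\Rightarrow\Delta$; $\vee_R^1$: $\Gamma\Rightarrow\varphi$ / $\Gamma\Rightarrow\varphi\vee\psi$; $\vee_R^2$: $\Gamma\Rightarrow\psi$ / $\Gamma\Rightarrow\varphi\vee\psi$;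 $\to_R$: $\Gamma,\varphi\Rightarrow\psi$ / $\Gamma\Rightarrow\varphi\to\psi$; $\to_L$: $\Gamma,\varphi\to\psi\Rightarrow\varphi$, $\Gamma,\psi\Rightarrow\Delta$ / $\Gamma,\varphi\to\psi\Rightarrow\Delta$; $\Box$: $\{\varphi\Leftrightarrow\rho_i\}_{i\le n}$, $\sigma_1,\dots,\sigma_n\Rightarrow\psi$ / $\Gamma,\rho_1\mathrel{\Box\!\!\to}\sigma_1,\dots,\rho_n\mathrel{\Box\!\!\to}\sigma_n\Rightarrow\varphi\mathrel{\Box\!\!\to}\psi$; $\Diamond$: $\{\varphi\Leftrightarrow\rho_i\}_{i\le n}$, $\varphi\Leftrightarrow\eta$, $\sigma_1,\dots,\sigma_n,\psi\Rightarrow\vartheta$ / $\Gamma,\rho_1\mathrel{\Box\!\!\to}\sigma_1,\dots,\rho_n\mathrel{\Box\!\!\to}\sigma_n,\varphi\mathrel{\Diamond\!\!\to}\psi\Rightarrow\eta\mathrel{\Diamond\!\!\to}\vartheta$; $\Box\Diamond$: $\{\varphi\Leftrightarrow\rho_i\}_{i\le n}$, $\sigma_1,\dots,\sigma_n,\psi\Rightarrow$ / $\Gamma,\rho_1\mathrel{\Box\!\!\to}\sigma_1,\dots,\rho_n\mathrel{\Box\!\!\to}\sigma_n,\varphi\mathrel{\Diamond\!\!\to}\psi\Rightarrow\Delta$. *)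

From Stdlib Require Import List Permutation.
Import ListNotations.

Inductive form : Type :=
| Var : nat -> form
| Bot : form
| And : form -> form -> form
| Or : form -> form -> form
| Imp : form -> form -> form
| BoxArr : form -> form -> form
| DiaArr : form -> form -> form.

Definition Neg (a : form) : form := Imp a Bot.
Definition Top : form := Neg Bot.
Definition Iff (a b : form) : form := And (Imp a b) (Imp b a).

Inductive HDer : form -> Prop :=
| H_K  : forall a b, HDer (Imp a (Imp b a))
| H_S  : forall a b c, HDer (Imp (Imp a (Imp b c)) (Imp (Imp a b) (Imp a c)))
| H_AE1 : forall a b, HDer (Imp (And a b) a)
| H_AE2 : forall a b, HDer (Imp (And a b) b)
| H_AI : forall a b, HDer (Imp a (Imp b (And a b)))
| H_OI1 : forall a b, HDer (Imp a (Or a b))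
| H_OI2 : forall a b, HDer (Imp b (Or a b))
| H_OE : forall a b c, HDer (Imp (Imp a c) (Imp (Imp b c) (Imp (Or a b) c)))
| H_EFQ : forall a, HDer (Imp Bot a)
| H_MP : forall a b, HDer (Imp a b) -> HDer a -> HDer b
| H_CMbox : forall a b c,
    HDer (Imp (BoxArr a (And b c)) (And (BoxArr a b) (BoxArr a c)))
| H_CCbox : forall a b c,
    HDer (Imp (And (BoxArr a b) (BoxArr a c)) (BoxArr a (And b c)))
| H_CNbox : forall a, HDer (BoxArr a Top)
| H_CNdia : forall a, HDer (Neg (DiaArr a Bot))
| H_CKdia : forall a b c,
    HDer (Imp (BoxArr a (Imp b c)) (Imp (DiaArr a b) (DiaArr a c)))
| H_RAbox : forall a r b, HDer (Iff a r) -> HDer (Iff (BoxArr a b) (BoxArr r b))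
| H_RCbox : forall a b c, HDer (Iff b c) -> HDer (Iff (BoxArr a b) (BoxArr a c))
| H_RAdia : forall a r b, HDer (Iff a r) -> HDer (Iff (DiaArr a b) (DiaArr r b))
| H_RCdia : forall a b c, HDer (Iff b c) -> HDer (Iff (DiaArr a b) (DiaArr a c)).

(** Sequents: antecedent a list read as a multiset (every rule's conclusion
    may be any permutation of its displayed antecedent), succedent an
    [option form] (so |Delta| <= 1). *)
Definition boxes (rs : list (form * form)) : list form :=
  map (fun rs => BoxArr (fst rs) (snd rs)) rs.

Inductive SDer : list form -> option form -> Prop :=
| S_init : forall G p G',
    Permutation G' (G ++ [Var p]) -> SDer G' (Some (Var p))
| S_botL : forall G D G',
    Permutation G' (G ++ [Bot]) -> SDer G' D
| S_andL : forall G a b D G',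
    SDer (G ++ [a; b]) D ->
    Permutation G' (G ++ [And a b]) -> SDer G' D
| S_andR : forall G a b,
    SDer G (Some a) -> SDer G (Some b) -> SDer G (Some (And a b))
| S_orL : forall G a b D G',
    SDer (G ++ [a]) D -> SDer (G ++ [b]) D ->
    Permutation G' (G ++ [Or a b]) -> SDer G' D
| S_orR1 : forall G a b, SDer G (Some a) -> SDer G (Some (Or a b))
| S_orR2 : forall G a b, SDer G (Some b) -> SDer G (Some (Or a b))
| S_impR : forall G a b, SDer (G ++ [a]) (Some b) -> SDer G (Some (Imp a b))
| S_impL : forall G a b D G',
    SDer (G ++ [Imp a b]) (Some a) -> SDer (G ++ [b]) D ->
    Permutation G' (G ++ [Imp a b]) -> SDer G' D
| S_box : forall G (rs : list (form * form)) a b G',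
    (forall r s, In (r, s) rs -> SDer [a] (Some r) /\ SDer [r] (Some a)) ->
    SDer (map snd rs) (Some b) ->
    Permutation G' (G ++ boxes rs) ->
    SDer G' (Some (BoxArr a b))
| S_dia : forall G (rs : list (form * form)) a b e t G',
    (forall r s, In (r, s) rs -> SDer [a] (Some r) /\ SDer [r] (Some a)) ->
    SDer [a] (Some e) -> SDer [e] (Some a) ->
    SDer (map snd rs ++ [b]) (Some t) ->
    Permutation G' (G ++ boxes rs ++ [DiaArr a b]) ->
    SDer G' (Some (DiaArr e t))
| S_boxdia : forall G (rs : list (form * form)) a b D G',
    (forall r s, In (r, s) rs -> SDer [a] (Some r) /\ SDer [r] (Some a)) ->
    SDer (map snd rs ++ [b]) None ->
    Permutation G' (G ++ boxes rs ++ [DiaArr a b]) ->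
    SDer G' D.

Definition bigwedge (g : form) (gs : list form) : form := fold_left And gs g.
Definition bigvee (D : option form) : form :=
  match D with None => Bot | Some d => d end.
Definition iota (G : list form) (D : option form) : form :=
  match G with
  | [] => bigvee D
  | g :: gs => Imp (bigwedge g gs) (bigvee D)
  end.

(* Soundness is a routine induction: every rule of S.ConstCK is derivable in
   ConstCK, the box rule by RA, CC, CN and monotonicity of the consequent (from
   RC and CM), the diamond rules by CK, RA and CN.  Completeness needs cut, for
   modus ponens and for the rules RA and RC.  Cut is admissible in a variant of
   S.ConstCK whose antecedents are sets (so weakening and contraction hold by
   construction), by induction on the cut formula and on both derivations; the
   only genuinely modal reductions merge the boxes (and the diamond) of a
   derivation of the cut formula into the modal rule applied after it.
   Height-preserving invertibility of the left rules then carries this set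
   calculus back to the multiset calculus. *)

From Stdlib Require Import List Permutation Arith Lia.
Import ListNotations.

Lemma form_eq_dec (x y : form) : {x = y} + {x <> y}.
Proof. decide equality; apply PeanoNat.Nat.eq_dec. Defined.

Lemma form_pair_eq_dec (x y : form * form) : {x = y} + {x <> y}.
Proof. decide equality; apply form_eq_dec. Defined.

Lemma in_remove_iff (x y : form) l : In x (remove form_eq_dec y l) <-> In x l /\ x <> y.
Proof. split; [apply in_remove|intros []; apply in_in_remove; auto]. Qed.

Ltac solve_incl :=
  let x := fresh "x" in let Hx := fresh "Hx" in
  intros x Hx; cbn [In app map boxes] in *;
  repeat rewrite ?in_app_iff, ?in_remove_iff in *; cbn [In] in *;
  intuition (subst; auto with datatypes; try discriminate;
    match goal with
    | H : incl ?l _, Hy : In ?y ?l |- _ =>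
        let Hy' := fresh in pose proof (H y Hy) as Hy'; clear Hy; cbn [In app] in Hy';
        repeat rewrite ?in_app_iff, ?in_remove_iff in Hy'; intuition (subst; auto with datatypes)
    end).

Lemma in_boxes x rs : In x (boxes rs) <-> exists r s, x = BoxArr r s /\ In (r, s) rs.
Proof.
  unfold boxes; rewrite in_map_iff; split.
  - intros [[r s] [<- H]]; eauto.
  - intros (r & s & -> & H); exists (r, s); auto.
Qed.

Lemma in_map_snd (x : form) (rs : list (form * form)) :
  In x (map snd rs) <-> exists r, In (r, x) rs.
Proof.
  rewrite in_map_iff; split.
  - intros [[r s] [<- H]]; eauto.
  - intros [r H]; exists (r, x); auto.
Qed.

(** * A set-based calculus with heights *)

(* The rules of S.ConstCK, except that principal formulas stay in the
   antecedent, which is only read through [In] and [incl]: weakening and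
   contraction are built in.  Heights are needed for the height-preserving
   inversion of the left rules. *)
Inductive derh : nat -> list form -> option form -> Prop :=
| dh_init n G p : In (Var p) G -> derh n G (Some (Var p))
| dh_botL n G d : In Bot G -> derh n G d
| dh_andL n G a b d : In (And a b) G -> derh n (a :: b :: G) d -> derh (S n) G d
| dh_andR n G a b : derh n G (Some a) -> derh n G (Some b) -> derh (S n) G (Some (And a b))
| dh_orL n G a b d :
    In (Or a b) G -> derh n (a :: G) d -> derh n (b :: G) d -> derh (S n) G d
| dh_orR1 n G a b : derh n G (Some a) -> derh (S n) G (Some (Or a b))
| dh_orR2 n G a b : derh n G (Some b) -> derh (S n) G (Some (Or a b))
| dh_impR n G a b : derh n (a :: G) (Some b) -> derh (S n) G (Some (Imp a b))
| dh_impL n G a b d :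
    In (Imp a b) G -> derh n G (Some a) -> derh n (b :: G) d -> derh (S n) G d
| dh_box n G rs a b :
    incl (boxes rs) G ->
    (forall r s, In (r, s) rs -> derh n [a] (Some r)) ->
    (forall r s, In (r, s) rs -> derh n [r] (Some a)) ->
    derh n (map snd rs) (Some b) -> derh (S n) G (Some (BoxArr a b))
| dh_dia n G rs a b e t :
    incl (boxes rs) G -> In (DiaArr a b) G ->
    (forall r s, In (r, s) rs -> derh n [a] (Some r)) ->
    (forall r s, In (r, s) rs -> derh n [r] (Some a)) ->
    derh n [a] (Some e) -> derh n [e] (Some a) ->
    derh n (b :: map snd rs) (Some t) -> derh (S n) G (Some (DiaArr e t))
| dh_boxdia n G rs a b d :
    incl (boxes rs) G -> In (DiaArr a b) G ->
    (forall r s, In (r, s) rs -> derh n [a] (Some r)) ->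
    (forall r s, In (r, s) rs -> derh n [r] (Some a)) ->
    derh n (b :: map snd rs) None -> derh (S n) G d.

Lemma derh_weaken n G d : derh n G d -> forall m G', n <= m -> incl G G' -> derh m G' d.
Proof.
  induction 1; intros m G' Hnm HG;
    try (destruct m as [|m]; [lia|apply le_S_n in Hnm]).
  all: try solve [econstructor; eauto using incl_tran, incl_refl].
  all: econstructor; eauto;
    first [ solve [apply IHderh; auto; solve_incl]
          | solve [apply IHderh1; auto; solve_incl]
          | solve [apply IHderh2; auto; solve_incl] ].
Qed.

Lemma derh_raise n m G d : derh n G d -> n <= m -> derh m G d.
Proof. intros H Hnm; eapply derh_weaken; eauto using incl_refl. Qed.

Definition der G d : Prop := exists n, derh n G d.

Lemma der_weaken G G' d : der G d -> incl G G' -> der G' d.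
Proof. intros [n H] HG; exists n; eapply derh_weaken; eauto. Qed.

Definition interderivable (a e : form) : Prop := der [a] (Some e) /\ der [e] (Some a).

Definition equiv_antecedents (rs : list (form * form)) (a : form) : Prop :=
  forall r s, In (r, s) rs -> interderivable a r.

Lemma equiv_antecedents_height rs a : equiv_antecedents rs a ->
  exists n, (forall r s, In (r, s) rs -> derh n [a] (Some r)) /\
            (forall r s, In (r, s) rs -> derh n [r] (Some a)).
Proof.
  induction rs as [|[r s] rs IH]; intros H.
  - exists 0; split; intros ? ? [].
  - destruct (H r s (in_eq _ _)) as [[n1 H1] [n2 H2]].
    destruct IH as (n & Hl & Hr). { intros r' s' Hin; apply (H r' s'); simpl; auto. }
    exists (max n (max n1 n2)); split; intros r' s' [E|Hin];
      try injection E as -> ->; eapply derh_raise; eauto; lia.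
Qed.

Lemma equiv_antecedents_of_derh n rs a :
  (forall r s, In (r, s) rs -> derh n [a] (Some r)) ->
  (forall r s, In (r, s) rs -> derh n [r] (Some a)) -> equiv_antecedents rs a.
Proof. intros H1 H2 r s H; split; exists n; eauto. Qed.

Lemma equiv_antecedents_single a r s : interderivable a r -> equiv_antecedents [(r, s)] a.
Proof. intros H r' s' [E|[]]; injection E as <- <-; auto. Qed.

Lemma equiv_antecedents_app rs1 rs2 a :
  equiv_antecedents rs1 a -> equiv_antecedents rs2 a -> equiv_antecedents (rs1 ++ rs2) a.
Proof. intros H1 H2 r s H; apply in_app_or in H as [H|H]; eauto. Qed.

Section DerRules.

Variable G : list form.

Lemma der_init p : In (Var p) G -> der G (Some (Var p)).
Proof. intros H; exists 0; constructor; auto. Qed.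

Lemma der_botL d : In Bot G -> der G d.
Proof. intros H; exists 0; constructor; auto. Qed.

Lemma der_andL a b d : In (And a b) G -> der (a :: b :: G) d -> der G d.
Proof. intros H [n Hn]; exists (S n); eapply dh_andL; eauto. Qed.

Lemma der_andR a b : der G (Some a) -> der G (Some b) -> der G (Some (And a b)).
Proof.
  intros [n Ha] [m Hb]; exists (S (max n m)).
  apply dh_andR; eapply derh_raise; eauto; lia.
Qed.

Lemma der_orL a b d : In (Or a b) G -> der (a :: G) d -> der (b :: G) d -> der G d.
Proof.
  intros H [n Ha] [m Hb]; exists (S (max n m)).
  eapply dh_orL; eauto; eapply derh_raise; eauto; lia.
Qed.

Lemma der_orR1 a b : der G (Some a) -> der G (Some (Or a b)).
Proof. intros [n H]; exists (S n); apply dh_orR1; auto. Qed.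

Lemma der_orR2 a b : der G (Some b) -> der G (Some (Or a b)).
Proof. intros [n H]; exists (S n); apply dh_orR2; auto. Qed.

Lemma der_impR a b : der (a :: G) (Some b) -> der G (Some (Imp a b)).
Proof. intros [n H]; exists (S n); apply dh_impR; auto. Qed.

Lemma der_impL a b d : In (Imp a b) G -> der G (Some a) -> der (b :: G) d -> der G d.
Proof.
  intros H [n Ha] [m Hb]; exists (S (max n m)).
  eapply dh_impL; eauto; eapply derh_raise; eauto; lia.
Qed.

Lemma der_box rs a b : incl (boxes rs) G -> equiv_antecedents rs a ->
  der (map snd rs) (Some b) -> der G (Some (BoxArr a b)).
Proof.
  intros Hrs Heq [m Hb]; destruct (equiv_antecedents_height _ _ Heq) as (n & H1 & H2).
  exists (S (max n m)); eapply dh_box; eauto; intros; eapply derh_raise; eauto; lia.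
Qed.

Lemma der_dia rs a b e t : incl (boxes rs) G -> In (DiaArr a b) G ->
  equiv_antecedents rs a -> interderivable a e ->
  der (b :: map snd rs) (Some t) -> der G (Some (DiaArr e t)).
Proof.
  intros Hrs Hd Heq [[n1 H1] [n2 H2]] [n3 H3].
  destruct (equiv_antecedents_height _ _ Heq) as (n & Hl & Hr).
  exists (S (max n (max n1 (max n2 n3)))).
  eapply dh_dia; eauto; intros; eapply derh_raise; eauto; lia.
Qed.

Lemma der_boxdia rs a b d : incl (boxes rs) G -> In (DiaArr a b) G ->
  equiv_antecedents rs a -> der (b :: map snd rs) None -> der G d.
Proof.
  intros Hrs Hd Heq [m Hb]; destruct (equiv_antecedents_height _ _ Heq) as (n & H1 & H2).
  exists (S (max n m)); eapply dh_boxdia; eauto; intros; eapply derh_raise; eauto; lia.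
Qed.

End DerRules.

Lemma der_id A G : In A G -> der G (Some A).
Proof.
  revert G; induction A as [p| |a IHa b IHb|a IHa b IHb|a IHa b IHb|a IHa b IHb|a IHa b IHb];
    intros G H.
  - apply der_init; auto.
  - apply der_botL; auto.
  - eapply der_andL; eauto; apply der_andR; [apply IHa|apply IHb]; simpl; auto.
  - eapply der_orL; eauto; [apply der_orR1, IHa|apply der_orR2, IHb]; simpl; auto.
  - apply der_impR; eapply der_impL; [right; eauto|apply IHa|apply IHb]; simpl; auto.
  - apply der_box with (rs := [(a, b)]); [solve_incl| |apply IHb; simpl; auto].
    apply equiv_antecedents_single; split; apply IHa; simpl; auto.
  - apply der_dia with (rs := []) (a := a) (b := b); [solve_incl|auto|intros ? ? []| |];
      [split; apply IHa|apply IHb]; simpl; auto.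
Qed.

(** * Cut admissibility *)

Definition cut_admissible (A : form) : Prop :=
  forall G d, der G (Some A) -> der (A :: G) d -> der G d.

Definition immediate_subformula (B A : form) : Prop :=
  match A with
  | And a b | Or a b | Imp a b | BoxArr a b | DiaArr a b => B = a \/ B = b
  | _ => False
  end.

Lemma interderivable_trans x a c : cut_admissible x ->
  interderivable a x -> interderivable x c -> interderivable a c.
Proof.
  intros Hx [Hax Hxa] [Hxc Hcx]; split; apply Hx; auto;
    eapply der_weaken; eauto; solve_incl.
Qed.

Lemma interderivable_sym a e : interderivable a e -> interderivable e a.
Proof. intros []; split; auto. Qed.

Lemma incl_boxes_cons rs A G : incl (boxes rs) (A :: G) ->
  incl (boxes rs) G \/ exists p q, A = BoxArr p q /\ In (p, q) rs.
Proof.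
  induction rs as [|[r s] rs IH]; intros H.
  - left; intros x [].
  - destruct (form_eq_dec A (BoxArr r s)) as [E|E]; [right; exists r, s; simpl; auto|].
    destruct IH as [H1|(p & q & H1 & H2)]; [intros x Hx; apply H; simpl; auto| |].
    + left; intros x [<-|Hx]; auto.
      destruct (H (BoxArr r s)) as [E'|E']; simpl; auto; congruence.
    + right; exists p, q; simpl; auto.
Qed.

(* The [(p, q)] entries of [rs] are replaced by the boxes [rsD] from which
   [BoxArr p q] was derived by the box rule. *)
Lemma boxes_merge p q G rsD rs a : cut_admissible p -> cut_admissible q ->
  incl (boxes rsD) G -> equiv_antecedents rsD p -> der (map snd rsD) (Some q) ->
  incl (boxes rs) (BoxArr p q :: G) -> equiv_antecedents rs a -> In (p, q) rs ->
  exists rs', incl (boxes rs') G /\ equiv_antecedents rs' a /\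
    (forall L o, der (L ++ map snd rs) o -> der (L ++ map snd rs') o).
Proof.
  intros Cp Cq HiD HeD Hq Hi He Hpq.
  exists (rsD ++ remove form_pair_eq_dec (p, q) rs); split; [|split].
  - unfold boxes; rewrite map_app; apply incl_app; auto.
    intros x Hx; apply in_boxes in Hx as (r & s & -> & Hx).
    apply in_remove in Hx as [Hx Hne].
    destruct (Hi (BoxArr r s)) as [E|E]; [apply in_boxes; eauto|congruence|auto].
  - apply equiv_antecedents_app.
    + intros r s Hr; apply interderivable_trans with p; eauto.
    + intros r s Hr; apply in_remove in Hr as [Hr _]; eauto.
  - intros L o H; apply Cq.
    + eapply der_weaken; eauto; rewrite map_app; solve_incl.
    + eapply der_weaken; eauto.
      intros x Hx; apply in_app_or in Hx as [Hx|Hx]; [simpl; auto with datatypes|].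
      apply in_map_snd in Hx as [r Hx].
      destruct (form_pair_eq_dec (r, x) (p, q)) as [E|E]; [injection E as -> ->; simpl; auto|].
      right; apply in_or_app; right; rewrite map_app; apply in_or_app; right.
      apply in_map_snd; exists r; apply in_in_remove; auto.
Qed.

(* The diamond [DiaArr e0 t0] is replaced by the diamond [DiaArr a0 b0] and the
   boxes [rsD] from which it was derived by the diamond rule. *)
Lemma dia_merge e0 t0 rsD a0 b0 rs o : cut_admissible e0 -> cut_admissible t0 ->
  equiv_antecedents rsD a0 -> interderivable a0 e0 ->
  der (b0 :: map snd rsD) (Some t0) ->
  equiv_antecedents rs e0 -> der (t0 :: map snd rs) o ->
  equiv_antecedents (rsD ++ rs) a0 /\ der (b0 :: map snd (rsD ++ rs)) o.
Proof.
  intros Ce Ct HeD Ha0 Ht0 He Ho; split.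
  - apply equiv_antecedents_app; auto.
    intros r s Hr; apply interderivable_trans with e0; eauto.
  - rewrite map_app; apply Ct; eapply der_weaken; eauto; solve_incl.
Qed.

Inductive right_rule_der (G : list form) : form -> Prop :=
| rr_andR a b : der G (Some a) -> der G (Some b) -> right_rule_der G (And a b)
| rr_orR1 a b : der G (Some a) -> right_rule_der G (Or a b)
| rr_orR2 a b : der G (Some b) -> right_rule_der G (Or a b)
| rr_impR a b : der (a :: G) (Some b) -> right_rule_der G (Imp a b)
| rr_box rs a b : incl (boxes rs) G -> equiv_antecedents rs a ->
    der (map snd rs) (Some b) -> right_rule_der G (BoxArr a b)
| rr_dia rs a b e t : incl (boxes rs) G -> In (DiaArr a b) G ->
    equiv_antecedents rs a -> interderivable a e ->
    der (b :: map snd rs) (Some t) -> right_rule_der G (DiaArr e t).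

Lemma right_rule_der_weaken G G' A : right_rule_der G A -> incl G G' -> right_rule_der G' A.
Proof.
  intros [] HG; econstructor; eauto using incl_tran;
    eapply der_weaken; eauto; solve_incl.
Qed.

Lemma right_rule_der_cons G c A : right_rule_der G A -> right_rule_der (c :: G) A.
Proof. intros H; eapply right_rule_der_weaken; eauto; solve_incl. Qed.

Lemma incl_cons_swap (A c : form) L G : incl L (A :: G) -> incl (c :: L) (A :: c :: G).
Proof. intros H; solve_incl. Qed.

Lemma cut_andL_principal G a b d : cut_admissible a -> cut_admissible b ->
  right_rule_der G (And a b) -> der (a :: b :: G) d -> der G d.
Proof.
  intros Ca Cb HR H; inversion HR as [? ? Ha Hb| | | | |]; subst.
  apply Ca; auto; apply Cb; eapply der_weaken; eauto; solve_incl.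
Qed.

Lemma cut_orL_principal G a b d : cut_admissible a -> cut_admissible b ->
  right_rule_der G (Or a b) -> der (a :: G) d -> der (b :: G) d -> der G d.
Proof. intros Ca Cb HR Ha Hb; inversion HR; subst; [apply Ca|apply Cb]; auto. Qed.

Lemma cut_impL_principal G a b d : cut_admissible a -> cut_admissible b ->
  right_rule_der G (Imp a b) -> der G (Some a) -> der (b :: G) d -> der G d.
Proof.
  intros Ca Cb HR Ha Hb; inversion HR as [| | |? ? Hab| |]; subst.
  apply Cb; auto; apply Ca; auto.
Qed.

Section CutFormula.

Variable A : form.
Hypothesis cut_sub : forall B, immediate_subformula B A -> cut_admissible B.

Lemma cut_boxes_context G rs a : incl (boxes rs) (A :: G) -> equiv_antecedents rs a ->
  right_rule_der G A ->
  exists rs', incl (boxes rs') G /\ equiv_antecedents rs' a /\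
    (forall L o, der (L ++ map snd rs) o -> der (L ++ map snd rs') o).
Proof.
  intros Hi He HR; destruct (incl_boxes_cons _ _ _ Hi) as [HG|(p & q & -> & Hpq)].
  - exists rs; auto.
  - inversion HR as [| | | |rsD ? ? HiD HeD Hq|]; subst.
    eapply boxes_merge with (rsD := rsD); eauto; apply cut_sub; simpl; auto.
Qed.

Lemma cut_dia_context G rs a b o :
  incl (boxes rs) (A :: G) -> In (DiaArr a b) (A :: G) -> equiv_antecedents rs a ->
  der (b :: map snd rs) o -> right_rule_der G A ->
  exists rs' a' b', incl (boxes rs') G /\ In (DiaArr a' b') G /\
    equiv_antecedents rs' a' /\ der (b' :: map snd rs') o /\
    (forall e, interderivable a e -> interderivable a' e).
Proof.
  intros Hi [HA|Hd] He Ho HR.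
  - subst A; inversion HR as [| | | | |rsD a0 b0 ? ? HiD Hd0 HeD Ha0 Ht0]; subst.
    assert (Ca : cut_admissible a) by (apply cut_sub; simpl; auto).
    assert (Cb : cut_admissible b) by (apply cut_sub; simpl; auto).
    destruct (dia_merge a b rsD a0 b0 rs o) as [He' Ho']; auto.
    exists (rsD ++ rs), a0, b0; refine (conj _ (conj Hd0 (conj He' (conj Ho' _)))).
    + unfold boxes; rewrite map_app; apply incl_app; auto.
      intros x Hx; destruct (Hi x Hx) as [<-|]; auto.
      apply in_boxes in Hx as (? & ? & E & _); discriminate.
    + intros e Hae; apply interderivable_trans with a; auto.
  - destruct (cut_boxes_context G rs a) as (rs' & Hi' & He' & Hm); auto.
    exists rs', a, b; refine (conj Hi' (conj Hd (conj He' (conj _ (fun e H => H))))).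
    apply (Hm [b]); auto.
Qed.

Lemma cut_with_right_rule m L d : derh m L d ->
  forall G, incl L (A :: G) -> right_rule_der G A -> der G d.
Proof.
  induction 1 as [n L p Hp|n L d Hb|n L a b d Hab H IH|n L a b Ha IHa Hb IHb
    |n L a b d Hab Ha IHa Hb IHb|n L a b H IH|n L a b H IH|n L a b H IH
    |n L a b d Hab Ha IHa Hb IHb|n L rs a b Hi Hl Hr H IH
    |n L rs a b e t Hi Hd Hl Hr He1 He2 H IH|n L rs a b d Hi Hd Hl Hr H IH];
    intros G HL HR.
  - destruct (HL _ Hp) as [HA|]; [subst A; inversion HR|apply der_init; auto].
  - destruct (HL _ Hb) as [HA|]; [subst A; inversion HR|apply der_botL; auto].
  - assert (K : der (a :: b :: G) d) by auto 6 using incl_cons_swap, right_rule_der_cons.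
    destruct (HL _ Hab) as [HA|]; [subst A|eapply der_andL; eauto].
    apply cut_andL_principal with a b; auto; apply cut_sub; simpl; auto.
  - apply der_andR; auto.
  - assert (Ka : der (a :: G) d) by auto using incl_cons_swap, right_rule_der_cons.
    assert (Kb : der (b :: G) d) by auto using incl_cons_swap, right_rule_der_cons.
    destruct (HL _ Hab) as [HA|]; [subst A|eapply der_orL; eauto].
    apply cut_orL_principal with a b; auto; apply cut_sub; simpl; auto.
  - apply der_orR1; auto.
  - apply der_orR2; auto.
  - apply der_impR; auto using incl_cons_swap, right_rule_der_cons.
  - assert (Ka : der G (Some a)) by auto.
    assert (Kb : der (b :: G) d) by auto using incl_cons_swap, right_rule_der_cons.
    destruct (HL _ Hab) as [HA|]; [subst A|eapply der_impL; eauto].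
    apply cut_impL_principal with a b; auto; apply cut_sub; simpl; auto.
  - destruct (cut_boxes_context G rs a) as (rs' & Hi' & He' & Hm); eauto using incl_tran.
    { eapply equiv_antecedents_of_derh; eauto. }
    eapply der_box; eauto; apply (Hm []); exists n; auto.
  - destruct (cut_dia_context G rs a b (Some t))
      as (rs' & a' & b' & Hi' & Hd' & He' & Ho & Ha'); eauto using incl_tran.
    { eapply equiv_antecedents_of_derh; eauto. }
    { exists n; auto. }
    eapply der_dia; eauto; apply Ha'; split; exists n; auto.
  - destruct (cut_dia_context G rs a b None)
      as (rs' & a' & b' & Hi' & Hd' & He' & Ho & _); eauto using incl_tran.
    { eapply equiv_antecedents_of_derh; eauto. }
    { exists n; auto. }
    eapply der_boxdia; eauto.
Qed.

Lemma cut_with_left_derivation n G o : derh n G o ->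
  o = Some A -> forall d, der (A :: G) d -> der G d.
Proof.
  induction 1 as [n G p Hp|n G o Hb|n G a b o Hab H IH|n G a b Ha _ Hb _
    |n G a b o Hab Ha IHa Hb IHb|n G a b H _|n G a b H _|n G a b H _
    |n G a b o Hab Ha _ Hb IHb|n G rs a b Hi Hl Hr H _
    |n G rs a b e t Hi Hd Hl Hr He1 He2 H _|n G rs a b o Hi Hd Hl Hr H _];
    intros Ho d HAG;
    (* a right rule introduced the cut formula: cut on the right derivation instead *)
    try (injection Ho as HA; destruct HAG as [m Hm];
         apply (cut_with_right_rule m (A :: G) d Hm G (incl_refl _)); rewrite <- HA;
         econstructor;
         solve [eauto | exists n; auto | split; exists n; auto
               | eapply equiv_antecedents_of_derh; eauto]).
  - injection Ho as <-; eapply der_weaken; eauto; solve_incl.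
  - apply der_botL; auto.
  - eapply der_andL; eauto; apply IH; auto; eapply der_weaken; eauto; solve_incl.
  - eapply der_orL; [eassumption|apply IHa|apply IHb]; auto;
      eapply der_weaken; eauto; solve_incl.
  - eapply der_impL; [eassumption|exists n; auto|].
    apply IHb; auto; eapply der_weaken; eauto; solve_incl.
  - eapply der_boxdia; eauto; [eapply equiv_antecedents_of_derh; eauto|exists n; auto].
Qed.

End CutFormula.

Theorem cut_admissible_all A : cut_admissible A.
Proof.
  induction A; intros G d [k Hk] HAG; eapply cut_with_left_derivation; eauto;
    intros B HB; simpl in HB; intuition (subst; auto).
Qed.

(** * Soundness *)

Inductive HDerFrom (G : list form) : form -> Prop :=
| hf_hyp f : In f G -> HDerFrom G f
| hf_thm f : HDer f -> HDerFrom G f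
| hf_mp f g : HDerFrom G (Imp f g) -> HDerFrom G f -> HDerFrom G g.

Lemma HDer_refl a : HDer (Imp a a).
Proof. eapply H_MP; [eapply H_MP; [apply (H_S a (Imp a a) a)|apply H_K]|apply (H_K a a)]. Qed.

Lemma HDerFrom_deduction G a b : HDerFrom (a :: G) b -> HDerFrom G (Imp a b).
Proof.
  induction 1 as [f [<-|H]|f H|f g _ IHfg _ IHf].
  - apply hf_thm, HDer_refl.
  - eapply hf_mp; [apply hf_thm, H_K|apply hf_hyp; auto].
  - eapply hf_mp; [apply hf_thm, H_K|apply hf_thm; auto].
  - eapply hf_mp; [eapply hf_mp; [apply hf_thm, H_S|exact IHfg]|exact IHf].
Qed.

Lemma HDerFrom_subst G G' f : HDerFrom G f ->
  (forall x, In x G -> HDerFrom G' x) -> HDerFrom G' f.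
Proof. induction 1; intros; [auto|apply hf_thm; auto|eapply hf_mp; eauto]. Qed.

Lemma HDerFrom_weaken G G' f : HDerFrom G f -> incl G G' -> HDerFrom G' f.
Proof. intros H HG; eapply HDerFrom_subst; eauto using hf_hyp. Qed.

Lemma HDerFrom_nil f : HDerFrom [] f -> HDer f.
Proof. induction 1 as [f []| |]; eauto using H_MP. Qed.

Lemma HDer_imp_of a b : HDerFrom [a] b -> HDer (Imp a b).
Proof. intros; apply HDerFrom_nil, HDerFrom_deduction; auto. Qed.

Section HilbertRules.

Variable G : list form.

Lemma hf_thm_mp f g : HDer (Imp f g) -> HDerFrom G f -> HDerFrom G g.
Proof. intros; eapply hf_mp; [apply hf_thm|]; eauto. Qed.

Lemma hf_andI a b : HDerFrom G a -> HDerFrom G b -> HDerFrom G (And a b).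
Proof. intros; eapply hf_mp; [eapply hf_thm_mp; [apply H_AI|]|]; eauto. Qed.

Lemma hf_andE1 a b : HDerFrom G (And a b) -> HDerFrom G a.
Proof. apply hf_thm_mp, H_AE1. Qed.

Lemma hf_andE2 a b : HDerFrom G (And a b) -> HDerFrom G b.
Proof. apply hf_thm_mp, H_AE2. Qed.

Lemma hf_iff_mp a b : HDer (Iff a b) -> HDerFrom G a -> HDerFrom G b.
Proof. intros Hab; apply hf_mp, (hf_andE1 _ (Imp b a)), hf_thm, Hab. Qed.

Lemma hf_iff_mpr a b : HDer (Iff a b) -> HDerFrom G b -> HDerFrom G a.
Proof. intros Hab; apply hf_mp, (hf_andE2 (Imp a b)), hf_thm, Hab. Qed.

End HilbertRules.

Lemma HDer_iff_of a b : HDerFrom [a] b -> HDerFrom [b] a -> HDer (Iff a b).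
Proof. intros; apply HDerFrom_nil, hf_andI; apply HDerFrom_deduction; auto. Qed.

Lemma hf_hyp0 G a : HDerFrom (a :: G) a.
Proof. apply hf_hyp; simpl; auto. Qed.

(* Monotonicity is not an axiom: it comes from [x <-> x /\ y] by RC and CM. *)
Lemma HDer_box_mono a x y : HDer (Imp x y) -> HDer (Imp (BoxArr a x) (BoxArr a y)).
Proof.
  intros Hxy; apply HDer_imp_of.
  assert (E : HDer (Iff x (And x y))).
  { apply HDer_iff_of; [apply hf_andI; [|eapply hf_thm_mp; eauto]|eapply hf_andE1];
      apply hf_hyp0. }
  apply H_RCbox with (a := a) in E.
  eapply hf_andE2, hf_thm_mp, hf_iff_mp, hf_hyp0; [apply H_CMbox|exact E].
Qed.

Lemma HDerFrom_boxes a rs b : (forall r s, In (r, s) rs -> HDer (Iff a r)) ->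
  HDerFrom (map snd rs) b -> HDerFrom (boxes rs) (BoxArr a b).
Proof.
  revert b; induction rs as [|[r s] rs IH]; intros b He Hb.
  - apply hf_thm; apply HDerFrom_nil in Hb.
    apply HDerFrom_nil; eapply hf_iff_mp; [apply H_RCbox|apply hf_thm, H_CNbox].
    apply HDer_iff_of; apply hf_thm; [auto|apply HDer_refl].
  - apply HDerFrom_deduction, IH in Hb; [|intros; eapply He; simpl; eauto].
    assert (Hs : HDerFrom (boxes ((r, s) :: rs)) (BoxArr a s)).
    { eapply hf_iff_mpr; [apply H_RAbox, (He r s)|apply hf_hyp0]; simpl; auto. }
    assert (Hsb : HDerFrom (boxes ((r, s) :: rs)) (BoxArr a (Imp s b))).
    { eapply HDerFrom_weaken; eauto; solve_incl. }
    eapply hf_thm_mp; [apply HDer_box_mono with (x := And s (Imp s b))|].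
    { apply HDer_imp_of; eapply hf_mp; [eapply hf_andE2|eapply hf_andE1]; apply hf_hyp0. }
    eapply hf_thm_mp; [apply H_CCbox|apply hf_andI; auto].
Qed.

Lemma HDerFrom_dia G rs a b c : incl (boxes rs) G -> In (DiaArr a b) G ->
  (forall r s, In (r, s) rs -> HDer (Iff a r)) ->
  HDerFrom (b :: map snd rs) c -> HDerFrom G (DiaArr a c).
Proof.
  intros Hi Hd He Hc.
  assert (Hbc : HDerFrom G (BoxArr a (Imp b c))).
  { eapply HDerFrom_weaken; [apply HDerFrom_boxes|exact Hi]; auto.
    apply HDerFrom_deduction; auto. }
  eapply hf_mp; [eapply hf_thm_mp; [apply H_CKdia|exact Hbc]|apply hf_hyp; auto].
Qed.

Lemma derh_sound n G d : derh n G d -> HDerFrom G (bigvee d).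
Proof.
  induction 1 as [n G p Hp|n G d Hb|n G a b d Hab H IH|n G a b Ha IHa Hb IHb
    |n G a b d Hab Ha IHa Hb IHb|n G a b H IH|n G a b H IH|n G a b H IH
    |n G a b d Hab Ha IHa Hb IHb|n G rs a b Hi Hl IHl Hr IHr H IH
    |n G rs a b e t Hi Hd Hl IHl Hr IHr He1 IHe1 He2 IHe2 H IH
    |n G rs a b d Hi Hd Hl IHl Hr IHr H IH]; simpl in *;
    try assert (He : forall r s, In (r, s) rs -> HDer (Iff a r))
      by (intros r s Hrs; apply HDer_iff_of; eauto).
  - apply hf_hyp; auto.
  - eapply hf_thm_mp; [apply H_EFQ|apply hf_hyp; auto].
  - apply HDerFrom_deduction, HDerFrom_deduction in IH.
    eapply hf_mp; [eapply hf_mp; [exact IH|]|];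
      [eapply (hf_andE2 _ a)|eapply (hf_andE1 _ _ b)]; apply hf_hyp; eauto.
  - apply hf_andI; auto.
  - apply HDerFrom_deduction in IHa, IHb.
    eapply hf_mp; [|apply hf_hyp; eauto].
    eapply hf_mp; [eapply hf_thm_mp; [apply H_OE|exact IHa]|exact IHb].
  - eapply hf_thm_mp; [apply H_OI1|auto].
  - eapply hf_thm_mp; [apply H_OI2|auto].
  - apply HDerFrom_deduction; auto.
  - apply HDerFrom_deduction in IHb.
    eapply hf_mp; [exact IHb|eapply hf_mp; [apply hf_hyp; eauto|auto]].
  - eapply HDerFrom_weaken; [apply HDerFrom_boxes|exact Hi]; auto.
  - eapply hf_iff_mp; [apply H_RAdia, HDer_iff_of; eauto|eapply HDerFrom_dia; eauto].
  - eapply hf_thm_mp; [apply H_EFQ|].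
    eapply hf_thm_mp; [apply (H_CNdia a)|eapply HDerFrom_dia; eauto].
Qed.

(** * Completeness *)

Ltac der_hyp := apply der_id; simpl; auto 10.

Lemma der_mp G a b : der G (Some (Imp a b)) -> der G (Some a) -> der G (Some b).
Proof.
  intros Hab Ha; apply (cut_admissible_all (Imp a b)); auto.
  eapply der_impL; [left; reflexivity|eapply der_weaken; eauto; solve_incl|der_hyp].
Qed.

Lemma der_impE G a b : der G (Some (Imp a b)) -> der (a :: G) (Some b).
Proof. intros H; eapply der_mp; [eapply der_weaken; eauto; solve_incl|der_hyp]. Qed.

Lemma interderivable_refl a : interderivable a a.
Proof. split; der_hyp. Qed.

Lemma der_andE1 G a b : der G (Some (And a b)) -> der G (Some a).
Proof.
  intros H; apply (cut_admissible_all (And a b)); auto.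
  eapply der_andL; [left; reflexivity|der_hyp].
Qed.

Lemma der_andE2 G a b : der G (Some (And a b)) -> der G (Some b).
Proof.
  intros H; apply (cut_admissible_all (And a b)); auto.
  eapply der_andL; [left; reflexivity|der_hyp].
Qed.

Lemma interderivable_of_iff a b : der [] (Some (Iff a b)) -> interderivable a b.
Proof. intros H; split; apply der_impE; [eapply der_andE1|eapply der_andE2]; exact H. Qed.

Lemma der_box_congr a r b c : interderivable a r -> interderivable b c ->
  der [] (Some (Iff (BoxArr a b) (BoxArr r c))).
Proof.
  intros Har [Hbc Hcb]; apply der_andR; apply der_impR.
  - apply der_box with (rs := [(a, b)]); auto; [solve_incl|].
    apply equiv_antecedents_single, interderivable_sym; auto.
  - apply der_box with (rs := [(r, c)]); auto; [solve_incl|].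
    apply equiv_antecedents_single; auto.
Qed.

Lemma der_dia_congr a r b c : interderivable a r -> interderivable b c ->
  der [] (Some (Iff (DiaArr a b) (DiaArr r c))).
Proof.
  intros Har [Hbc Hcb]; apply der_andR; apply der_impR.
  - apply der_dia with (rs := []) (a := a) (b := b);
      [solve_incl|simpl; auto|intros ? ? []|auto|auto].
  - apply der_dia with (rs := []) (a := r) (b := c);
      [solve_incl|simpl; auto|intros ? ? []|apply interderivable_sym; auto|auto].
Qed.

Lemma HDer_der f : HDer f -> der [] (Some f).
Proof.
  induction 1 as [a b|a b c|a b|a b|a b|a b|a b|a b c|a|a b _ IHab _ IHa
    |a b c|a b c|a|a|a b c|a r b _ IH|a b c _ IH|a r b _ IH|a b c _ IH];
    repeat apply der_impR.
  - der_hyp.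
  - eapply der_impL with (a := a) (b := Imp b c); [simpl; auto|der_hyp|].
    eapply der_impL with (a := a) (b := b); [simpl; auto 10|der_hyp|].
    eapply der_impL with (a := b) (b := c); [simpl; auto 10|der_hyp|der_hyp].
  - eapply der_andL; [left; reflexivity|der_hyp].
  - eapply der_andL; [left; reflexivity|der_hyp].
  - apply der_andR; der_hyp.
  - apply der_orR1; der_hyp.
  - apply der_orR2; der_hyp.
  - apply der_orL with (a := a) (b := b); [simpl; auto| |].
    + eapply der_impL with (a := a) (b := c); [simpl; auto 10|der_hyp|der_hyp].
    + eapply der_impL with (a := b) (b := c); [simpl; auto 10|der_hyp|der_hyp].
  - apply der_botL; simpl; auto.
  - eapply der_mp; eauto.
  - apply der_andR; apply der_box with (rs := [(a, And b c)]);
      try solve [solve_incl | apply equiv_antecedents_single, interderivable_refl];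
      (apply der_andL with (a := b) (b := c); [left; reflexivity|der_hyp]).
  - eapply der_andL; [left; reflexivity|].
    apply der_box with (rs := [(a, b); (a, c)]); [solve_incl| |apply der_andR; der_hyp].
    apply (equiv_antecedents_app [(a, b)] [(a, c)]);
      apply equiv_antecedents_single, interderivable_refl.
  - apply der_box with (rs := []); [solve_incl|intros ? ? []|].
    apply der_impR, der_botL; simpl; auto.
  - apply der_boxdia with (rs := []) (a := a) (b := Bot); simpl; auto;
      [solve_incl|intros ? ? []|apply der_botL; simpl; auto].
  - apply der_dia with (rs := [(a, Imp b c)]) (a := a) (b := b); [solve_incl|simpl; auto| | |].
    + apply equiv_antecedents_single, interderivable_refl.
    + apply interderivable_refl.
    + eapply der_impL with (a := b) (b := c); [simpl; auto|der_hyp|der_hyp].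
  - apply der_box_congr; [apply interderivable_of_iff|apply interderivable_refl]; auto.
  - apply der_box_congr; [apply interderivable_refl|apply interderivable_of_iff]; auto.
  - apply der_dia_congr; [apply interderivable_of_iff|apply interderivable_refl]; auto.
  - apply der_dia_congr; [apply interderivable_refl|apply interderivable_of_iff]; auto.
Qed.

Lemma der_bigwedge G g gs : der G (Some g) -> (forall x, In x gs -> der G (Some x)) ->
  der G (Some (bigwedge g gs)).
Proof.
  revert g; induction gs as [|h gs IH]; intros g Hg Hgs; simpl; auto.
  apply IH; [apply der_andR|]; auto with datatypes.
Qed.

Lemma HDerFrom_bigwedge G g gs : HDerFrom G (bigwedge g gs) ->
  forall x, In x (g :: gs) -> HDerFrom G x.
Proof.
  revert g; induction gs as [|h gs IH]; intros g H x Hx; simpl in *.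
  - destruct Hx as [<-|[]]; auto.
  - specialize (IH _ H); destruct Hx as [<-|[<-|Hx]]; auto with datatypes.
    + eapply hf_andE1, IH; simpl; auto.
    + eapply hf_andE2, IH; simpl; auto.
Qed.

Lemma der_bigvee G d : der G (Some (bigvee d)) -> der G d.
Proof.
  destruct d as [x|]; simpl; auto.
  intros H; apply (cut_admissible_all Bot); auto; apply der_botL; simpl; auto.
Qed.

Lemma der_iff_HDer_iota G d : der G d <-> HDer (iota G d).
Proof.
  split.
  - intros [n H]; apply derh_sound in H; destruct G as [|g gs]; simpl.
    + apply HDerFrom_nil; auto.
    + apply HDer_imp_of; eapply HDerFrom_subst; [exact H|].
      intros x Hx; eapply HDerFrom_bigwedge; [apply hf_hyp0|exact Hx].
  - intros H; apply HDer_der in H; apply der_bigvee; destruct G as [|g gs]; auto.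
    eapply der_mp; [eapply der_weaken; [exact H|intros ? []]|].
    apply der_bigwedge; intros; apply der_id; simpl; auto.
Qed.

(** * The multiset calculus *)

Definition left_premises (X : form) : list (list form) :=
  match X with
  | And a b => [[a; b]]
  | Or a b => [[a]; [b]]
  | Imp _ b => [[b]]
  | _ => []
  end.

Lemma in_app_remove (X Y : form) P G :
  In Y G -> Y <> X -> In Y (P ++ remove form_eq_dec X G).
Proof. intros; apply in_or_app; right; apply in_in_remove; auto. Qed.

Lemma incl_boxes_app_remove (X : form) P rs G : incl (boxes rs) G ->
  (forall r s, BoxArr r s <> X) -> incl (boxes rs) (P ++ remove form_eq_dec X G).
Proof.
  intros Hi Hnb y Hy; apply in_app_remove; auto.
  apply in_boxes in Hy as (r & s & -> & _); auto.
Qed.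

Lemma derh_left_inversion n G d : derh n G d ->
  forall X P, In X G -> In P (left_premises X) ->
  derh n (P ++ remove form_eq_dec X G) d.
Proof.
  induction 1 as [n G p Hp|n G d Hb|n G a b d Hab H IH|n G a b Ha IHa Hb IHb
    |n G a b d Hab Ha IHa Hb IHb|n G a b H IH|n G a b H IH|n G a b H IH
    |n G a b d Hab Ha IHa Hb IHb|n G rs a b Hi Hl _ Hr _ H _
    |n G rs a b e t Hi Hd Hl _ Hr _ He1 _ He2 _ H _|n G rs a b d Hi Hd Hl _ Hr _ H _];
    intros X P HX HP;
    assert (Hnb : forall r s, BoxArr r s <> X) by (intros ? ? <-; destruct HP);
    assert (Hnd : forall r s, DiaArr r s <> X) by (intros ? ? <-; destruct HP).
  - apply dh_init, in_app_remove; auto; intros <-; destruct HP.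
  - apply dh_botL, in_app_remove; auto; intros <-; destruct HP.
  - destruct (form_eq_dec (And a b) X) as [<-|HabX].
    + destruct HP as [<-|[]];
        eapply derh_weaken; [apply (IH (And a b) [a; b]); simpl; auto|lia|solve_incl].
    + apply dh_andL with a b; [apply in_app_remove; auto|].
      eapply derh_weaken; [apply (IH X P); simpl; auto|lia|solve_incl].
  - apply dh_andR; auto.
  - destruct (form_eq_dec (Or a b) X) as [<-|HabX].
    + destruct HP as [<-|[<-|[]]];
        [eapply derh_weaken; [apply (IHa (Or a b) [a]); simpl; auto|lia|solve_incl]
        |eapply derh_weaken; [apply (IHb (Or a b) [b]); simpl; auto|lia|solve_incl]].
    + apply dh_orL with a b; [apply in_app_remove; auto| |];
        [eapply derh_weaken; [apply (IHa X P); simpl; auto|lia|solve_incl]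
        |eapply derh_weaken; [apply (IHb X P); simpl; auto|lia|solve_incl]].
  - apply dh_orR1; auto.
  - apply dh_orR2; auto.
  - apply dh_impR; eapply derh_weaken; [apply (IH X P); simpl; auto|lia|solve_incl].
  - destruct (form_eq_dec (Imp a b) X) as [<-|HabX].
    + destruct HP as [<-|[]];
        eapply derh_weaken; [apply (IHb (Imp a b) [b]); simpl; auto|lia|solve_incl].
    + apply dh_impL with a b; [apply in_app_remove; auto|auto|].
      eapply derh_weaken; [apply (IHb X P); simpl; auto|lia|solve_incl].
  - eapply dh_box; eauto using incl_boxes_app_remove.
  - eapply dh_dia; eauto using incl_boxes_app_remove, in_app_remove.
  - eapply dh_boxdia; eauto using incl_boxes_app_remove, in_app_remove.
Qed.

Lemma Permutation_app_incl (G G' L : list form) :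
  Permutation G' (G ++ L) -> incl G G' /\ incl L G'.
Proof.
  intros HP; split; intros x Hx; apply (Permutation_in x (Permutation_sym HP));
    apply in_or_app; auto.
Qed.

(* [SDer_ind] gives no induction hypothesis for the premises of the modal
   rules, which sit under a conjunction; hence a direct fixpoint. *)
Fixpoint SDer_der G d (H : SDer G d) {struct H} : der G d.
Proof.
  destruct H as [G p G' HP|G d G' HP|G a b d G' H HP|G a b Ha Hb|G a b d G' Ha Hb HP
    |G a b H|G a b H|G a b H|G a b d G' Ha Hb HP|G rs a b G' Heq H HP
    |G rs a b e t G' Heq Hae Hea H HP|G rs a b d G' Heq H HP];
    try apply Permutation_app_incl in HP as [HG HX];
    try (assert (Heq' : equiv_antecedents rs a)
           by (intros r s Hrs; destruct (Heq r s Hrs); split; apply SDer_der; auto)).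
  - apply der_init; auto with datatypes.
  - apply der_botL; auto with datatypes.
  - apply der_andL with a b; auto with datatypes.
    eapply der_weaken; [apply (SDer_der _ _ H)|solve_incl].
  - apply der_andR; apply SDer_der; auto.
  - apply der_orL with a b; auto with datatypes;
      eapply der_weaken; [apply (SDer_der _ _ Ha)|solve_incl|apply (SDer_der _ _ Hb)|solve_incl].
  - apply der_orR1, SDer_der; auto.
  - apply der_orR2, SDer_der; auto.
  - apply der_impR; eapply der_weaken; [apply (SDer_der _ _ H)|solve_incl].
  - apply der_impL with a b; auto with datatypes.
    + eapply der_weaken; [apply (SDer_der _ _ Ha)|solve_incl].
    + eapply der_weaken; [apply (SDer_der _ _ Hb)|solve_incl].
  - apply der_box with rs; auto; apply SDer_der; auto.
  - apply der_dia with rs a b; [solve_incl|auto with datatypes|auto| |].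
    + split; apply SDer_der; auto.
    + eapply der_weaken; [apply (SDer_der _ _ H)|solve_incl].
  - apply der_boxdia with rs a b; [solve_incl|auto with datatypes|auto|].
    eapply der_weaken; [apply (SDer_der _ _ H)|solve_incl].
Qed.

Lemma Permutation_split_in (X : form) G : In X G ->
  exists G0, Permutation G (G0 ++ [X]) /\ (forall y, In y G -> y <> X -> In y G0).
Proof.
  intros H; apply in_split in H as (l1 & l2 & ->); exists (l1 ++ l2); split.
  - rewrite <- Permutation_middle; apply Permutation_cons_append.
  - intros y Hy Hne; rewrite in_app_iff in *; simpl in Hy; intuition congruence.
Qed.

Lemma Permutation_extract (l G : list form) : NoDup l -> incl l G ->
  exists G0, Permutation G (G0 ++ l).
Proof.
  revert G; induction l as [|x l IH]; intros G Hnd Hi.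
  - exists G; rewrite app_nil_r; auto.
  - inversion Hnd as [|? ? Hx Hnd']; subst.
    destruct (Permutation_split_in x G) as (G1 & HP & HG1); [apply Hi; simpl; auto|].
    destruct (IH G1) as (G0 & HP0); auto.
    { intros y Hy; apply HG1; [apply Hi; simpl; auto|intros ->; contradiction]. }
    exists G0; rewrite HP, HP0, <- app_assoc; apply Permutation_app_head.
    symmetry; apply Permutation_cons_append.
Qed.

Lemma NoDup_boxes_nodup rs : NoDup (boxes (nodup form_pair_eq_dec rs)).
Proof.
  apply FinFun.Injective_map_NoDup; [|apply NoDup_nodup].
  intros [a b] [c d] E; injection E as -> ->; auto.
Qed.

Lemma incl_boxes_nodup rs : incl (boxes (nodup form_pair_eq_dec rs)) (boxes rs).
Proof. apply incl_map; intros x; apply nodup_In. Qed.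

Lemma incl_snd_nodup rs : incl (map snd rs) (map snd (nodup form_pair_eq_dec rs)).
Proof. apply incl_map; intros x; apply nodup_In. Qed.

Lemma Permutation_extract_boxdia G rs a b :
  incl (boxes rs) G -> In (DiaArr a b) G ->
  exists G0, Permutation G (G0 ++ boxes (nodup form_pair_eq_dec rs) ++ [DiaArr a b]).
Proof.
  intros Hi Hd; apply Permutation_extract.
  - apply NoDup_app; [apply NoDup_boxes_nodup|repeat constructor; auto|].
    intros x Hx [<-|[]]; apply in_boxes in Hx as (? & ? & E & _); discriminate.
  - apply incl_app; [eapply incl_tran; [apply incl_boxes_nodup|exact Hi]|].
    intros x [<-|[]]; auto.
Qed.

Lemma incl_inversion_context (X : form) P G G' G0 : incl G G' ->
  (forall y, In y G' -> y <> X -> In y G0) ->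
  incl (P ++ remove form_eq_dec X (P ++ G)) (G0 ++ P).
Proof.
  intros HG HG0 y Hy; rewrite !in_app_iff, in_remove_iff, in_app_iff in *.
  intuition.
Qed.

Lemma SDer_equiv_nodup n rs a : (forall G d, derh n G d -> SDer G d) ->
  (forall r s, In (r, s) rs -> derh n [a] (Some r)) ->
  (forall r s, In (r, s) rs -> derh n [r] (Some a)) ->
  forall r s, In (r, s) (nodup form_pair_eq_dec rs) -> SDer [a] (Some r) /\ SDer [r] (Some a).
Proof. intros IH Hl Hr r s Hrs; apply nodup_In in Hrs; split; eauto. Qed.

Lemma derh_SDer n : forall G d, derh n G d -> forall G', incl G G' -> SDer G' d.
Proof.
  induction n as [|n IH]; intros G d HD G' Hi;
    inversion HD as [? ? p Hp|? ? ? Hb|? ? a b ? Hab Hn|? ? a b Ha Hb|? ? a b ? Hab Ha Hb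
      |? ? a b Ha|? ? a b Hb|? ? a b Hn|? ? a b ? Hab Ha Hb|? ? rs a b Hi' Hl Hr Hn
      |? ? rs a b e t Hi' Hd Hl Hr Hae Hea Hn|? ? rs a b ? Hi' Hd Hl Hr Hn]; subst;
    try solve [destruct (Permutation_split_in (Var p) G') as (G0 & HP & _);
               [auto|eapply S_init; eauto]
              |destruct (Permutation_split_in Bot G') as (G0 & HP & _);
               [auto|eapply S_botL; eauto]].
  - destruct (Permutation_split_in (And a b) G') as (G0 & HP & HG0); [auto|].
    eapply S_andL; [|exact HP].
    eapply IH; [apply (derh_left_inversion _ _ _ Hn (And a b) [a; b]); simpl; auto|].
    apply (incl_inversion_context (And a b) [a; b] G G'); auto.
  - apply S_andR; eapply IH; eauto.
  - destruct (Permutation_split_in (Or a b) G') as (G0 & HP & HG0); [auto|].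
    eapply S_orL; [eapply IH| eapply IH|exact HP];
      [apply (derh_left_inversion _ _ _ Ha (Or a b) [a]); simpl; auto
      |apply (incl_inversion_context (Or a b) [a] G G'); auto
      |apply (derh_left_inversion _ _ _ Hb (Or a b) [b]); simpl; auto
      |apply (incl_inversion_context (Or a b) [b] G G'); auto].
  - apply S_orR1; eapply IH; eauto.
  - apply S_orR2; eapply IH; eauto.
  - apply S_impR; eapply IH; eauto; solve_incl.
  - destruct (Permutation_split_in (Imp a b) G') as (G0 & HP & HG0); [auto|].
    eapply S_impL; [eapply IH; [exact Ha|intros y Hy; eapply Permutation_in; eauto]| |exact HP].
    eapply IH; [apply (derh_left_inversion _ _ _ Hb (Imp a b) [b]); simpl; auto|].
    apply (incl_inversion_context (Imp a b) [b] G G'); auto.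
  - destruct (Permutation_extract (boxes (nodup form_pair_eq_dec rs)) G') as (G0 & HP).
    { apply NoDup_boxes_nodup. }
    { eapply incl_tran; [apply incl_boxes_nodup|eauto using incl_tran]. }
    eapply S_box; [|eapply IH; eauto using incl_snd_nodup|exact HP].
    apply SDer_equiv_nodup with n; eauto using incl_refl.
  - destruct (Permutation_extract_boxdia G' rs a b) as (G0 & HP); eauto using incl_tran.
    eapply S_dia; [|apply (IH _ _ Hae)|apply (IH _ _ Hea)|apply (IH _ _ Hn)|exact HP];
      [apply SDer_equiv_nodup with n; eauto using incl_refl|apply incl_refl..
      |pose proof (incl_snd_nodup rs); solve_incl].
  - destruct (Permutation_extract_boxdia G' rs a b) as (G0 & HP); eauto using incl_tran.
    eapply S_boxdia; [|apply (IH _ _ Hn)|exact HP];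
      [apply SDer_equiv_nodup with n; eauto using incl_refl
      |pose proof (incl_snd_nodup rs); solve_incl].
Qed.

Theorem theorem5 : forall (G : list form) (D : option form),
  SDer G D <-> HDer (iota G D).
Proof.
  intros G d; rewrite <- der_iff_HDer_iota; split.
  - apply SDer_der.
  - intros [n H]; eapply derh_SDer; eauto using incl_refl.
Qed.
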